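(* Let $(L,[\cdot,\cdot,\cdot],\alpha)$ be a 3-Hom-Lie algebra, $(V,\rho,\beta)$ a representation of it, and $T:V\to L$ an $\mathcal{O}$-operator associated to $(V,\rho,\beta)$. Then $(V,\{\cdot,\cdot,\cdot\},\beta)$ with $\{u,v,w\}=\rho(Tu,Tv)w$ for $u,v,w\in V$ is a 3-Hom-pre-Lie algebra.
   Context: A 3-Hom-Lie algebra is a triple $(L,[\cdot,\cdot,\cdot],\alpha)$ with $[\cdot,\cdot,\cdot]:\wedge^3L\to L$ skew-symmetric trilinear and $\alpha$ linear satisfying $[\alpha(x),\alpha(y),[u,v,w]]=[[x,y,u],\alpha(v),\alpha(w)]+[\alpha(u),[x,y,v],\alpha(w)]+[\alpha(u),\alpha(v),[x,y,w]]$. A representation $(V,\rho,\beta)$ of it is a vector space $V$, $\beta\in gl(V)$ and a skew-symmetric bilinear $\rho:L\wedge L\to gl(V)$ with, for all $x,y,z,u\in L$: $\rho(\alpha(x),\alpha(y))\beta=\beta\rho(x,y)$; $\rho([x,y,z],\alpha(u))\beta=\rho(\alpha(y),\alpha(z))\rho(x,u)+\rho(\alpha(z),\alpha(x))\rho(y,u)+\rho(\alpha(x),\alpha(y))\rho(z,u)$; $\rho(\alpha(x),\alpha(y))\rho(z,u)=\rho(\alpha(z),\alpha(u))\rho(x,y)+\rho([x,y,z],\alpha(u))\beta+\rho(\alpha(z),[x,y,u])\beta$. An $\mathcal{O}$-operator associated to $(V,\rho,\beta)$ is a linear map $T:V\to L$ with $\alpha\circ T=T\circ\beta$ and $[Tu,Tv,Tw]=T(\rho(Tu,Tv)w+\rho(Tv,Tw)u+\rho(Tw,Tu)v)$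 for all $u,v,w\in V$. A 3-Hom-pre-Lie algebra is $(A,\{\cdot,\cdot,\cdot\},\gamma)$ with trilinear $\{\cdot,\cdot,\cdot\}$ and linear $\gamma$ such that, with $[x,y,z]_C=\{x,y,z\}+\{y,z,x\}+\{z,x,y\}$: $\{x,y,z\}=-\{y,x,z\}$; $\{\gamma(x),\gamma(y),\{z,u,v\}\}=\{[x,y,z]_C,\gamma(u),\gamma(v)\}+\{\gamma(z),[x,y,u]_C,\gamma(v)\}+\{\gamma(z),\gamma(u),\{x,y,v\}\}$; $\{[x,y,z]_C,\gamma(u),\gamma(v)\}=\{\gamma(x),\gamma(y),\{z,u,v\}\}+\{\gamma(y),\gamma(z),\{x,u,v\}\}+\{\gamma(z),\gamma(x),\{y,u,v\}\}$. *)

From mathcomp Require Import all_boot all_order all_algebra.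
Set Implicit Arguments. Unset Strict Implicit. Unset Printing Implicit Defensive.
Import GRing.Theory.
Local Open Scope ring_scope.

Section Defs.
Variable K : fieldType.

Definition is_lin (U W : lmodType K) (f : U -> W) : Prop :=
  forall (a : K) (x y : U), f (a *: x + y) = a *: f x + f y.

Definition trilinear (U W : lmodType K) (br : U -> U -> U -> W) : Prop :=
  (forall y z, is_lin (fun x => br x y z)) /\
  (forall x z, is_lin (fun y => br x y z)) /\
  (forall x y, is_lin (fun z => br x y z)).

Definition skew3 (U W : lmodType K) (br : U -> U -> U -> W) : Prop :=
  (forall x y z, br y x z = - br x y z) /\
  (forall x y z, br x z y = - br x y z) /\
  (forall x y z, br z y x = - br x y z).

Definition is_3HomLie (L : lmodType K) (br : L -> L -> L -> L) (alpha : L -> L)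
  : Prop :=
  trilinear br /\ skew3 br /\ is_lin alpha /\
  forall x y u v w,
    br (alpha x) (alpha y) (br u v w)
    = br (br x y u) (alpha v) (alpha w)
      + br (alpha u) (br x y v) (alpha w)
      + br (alpha u) (alpha v) (br x y w).

Definition is_rep (L V : lmodType K) (br : L -> L -> L -> L) (alpha : L -> L)
  (rho : L -> L -> V -> V) (beta : V -> V) : Prop :=
  is_lin beta /\
  (forall x y, is_lin (rho x y)) /\
  (forall y (m : V), is_lin (fun x => rho x y m)) /\
  (forall x (m : V), is_lin (fun y => rho x y m)) /\
  (forall x y (m : V), rho y x m = - rho x y m) /\
  (forall x y (m : V), rho (alpha x) (alpha y) (beta m) = beta (rho x y m)) /\
  (forall x y z u (m : V),
     rho (br x y z) (alpha u) (beta m)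
     = rho (alpha y) (alpha z) (rho x u m)
       + rho (alpha z) (alpha x) (rho y u m)
       + rho (alpha x) (alpha y) (rho z u m)) /\
  (forall x y z u (m : V),
     rho (alpha x) (alpha y) (rho z u m)
     = rho (alpha z) (alpha u) (rho x y m)
       + rho (br x y z) (alpha u) (beta m)
       + rho (alpha z) (br x y u) (beta m)).

Definition is_O_operator (L V : lmodType K) (br : L -> L -> L -> L)
  (alpha : L -> L) (rho : L -> L -> V -> V) (beta : V -> V) (T : V -> L) : Prop :=
  is_lin T /\
  (forall m, alpha (T m) = T (beta m)) /\
  (forall u v w, br (T u) (T v) (T w)
                 = T (rho (T u) (T v) w + rho (T v) (T w) u + rho (T w) (T u) v)).

Definition comm3 (A : lmodType K) (pr : A -> A -> A -> A) (x y z : A) : A :=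
  pr x y z + pr y z x + pr z x y.

Definition is_3HomPreLie (A : lmodType K) (pr : A -> A -> A -> A) (gamma : A -> A)
  : Prop :=
  trilinear pr /\ is_lin gamma /\
  (forall x y z, pr x y z = - pr y x z) /\
  (forall x y z u v,
     pr (gamma x) (gamma y) (pr z u v)
     = pr (comm3 pr x y z) (gamma u) (gamma v)
       + pr (gamma z) (comm3 pr x y u) (gamma v)
       + pr (gamma z) (gamma u) (pr x y v)) /\
  (forall x y z u v,
     pr (comm3 pr x y z) (gamma u) (gamma v)
     = pr (gamma x) (gamma y) (pr z u v)
       + pr (gamma y) (gamma z) (pr x u v)
       + pr (gamma z) (gamma x) (pr y u v)).

End Defs.

(* Via T, the bracket [u,v,w]_C of {u,v,w} = rho(Tu,Tv)w is sent to [Tu,Tv,Tw], and beta is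
   sent to alpha.  Each 3-Hom-pre-Lie identity at (x,y,z,u,v) is therefore the corresponding
   representation identity at (Tx,Ty,Tz,Tu) applied to v. *)
From mathcomp Require Import all_boot all_order all_algebra.
Set Implicit Arguments. Unset Strict Implicit. Unset Printing Implicit Defensive.
Import GRing.Theory.
Local Open Scope ring_scope.

Lemma is_lin_comp (K : fieldType) (U W X : lmodType K) (f : U -> W) (g : W -> X) :
  is_lin f -> is_lin g -> is_lin (g \o f).
Proof. by move=> linf ling a x y /=; rewrite linf ling. Qed.

Section InducedProduct.
Variables (K : fieldType) (L V : lmodType K).
Variables (br : L -> L -> L -> L) (alpha : L -> L).
Variables (rho : L -> L -> V -> V) (beta : V -> V) (T : V -> L).

Let pr (u v w : V) : V := rho (T u) (T v) w.

Lemma induced_trilinear :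
  is_lin T ->
  (forall x y, is_lin (rho x y)) ->
  (forall y (m : V), is_lin (fun x => rho x y m)) ->
  (forall x (m : V), is_lin (fun y => rho x y m)) ->
  trilinear pr.
Proof.
move=> linT lin3 lin1 lin2; split; [|split] => [y z|x z|x y].
- exact: (is_lin_comp linT (lin1 (T y) z)).
- exact: (is_lin_comp linT (lin2 (T x) z)).
- exact: lin3.
Qed.

Lemma O_operator_comm3 :
  is_O_operator br alpha rho beta T ->
  forall x y z, T (comm3 pr x y z) = br (T x) (T y) (T z).
Proof. by move=> [_ [_ OT]] x y z; rewrite OT. Qed.

Hypothesis repV : is_rep br alpha rho beta.
Hypothesis OT : is_O_operator br alpha rho beta T.

Lemma induced_3HomPreLie_ax1 x y z u v :
  pr (beta x) (beta y) (pr z u v)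
  = pr (comm3 pr x y z) (beta u) (beta v)
    + pr (beta z) (comm3 pr x y u) (beta v)
    + pr (beta z) (beta u) (pr x y v).
Proof.
have [_ [_ [_ [_ [_ [_ [_ rep_ax3]]]]]]] := repV.
have [_ [alphaT _]] := OT.
rewrite /pr !(O_operator_comm3 OT) -!alphaT rep_ax3.
by rewrite -addrA [LHS]addrC.
Qed.

Lemma induced_3HomPreLie_ax2 x y z u v :
  pr (comm3 pr x y z) (beta u) (beta v)
  = pr (beta x) (beta y) (pr z u v)
    + pr (beta y) (beta z) (pr x u v)
    + pr (beta z) (beta x) (pr y u v).
Proof.
have [_ [_ [_ [_ [_ [_ [rep_ax2 _]]]]]]] := repV.
have [_ [alphaT _]] := OT.
rewrite /pr !(O_operator_comm3 OT) -!alphaT rep_ax2.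
by rewrite [LHS]addrC addrA.
Qed.

End InducedProduct.

Theorem proposition3p6 (K : fieldType) (L V : lmodType K)
  (br : L -> L -> L -> L) (alpha : L -> L)
  (rho : L -> L -> V -> V) (beta : V -> V) (T : V -> L) :
  is_3HomLie br alpha ->
  is_rep br alpha rho beta ->
  is_O_operator br alpha rho beta T ->
  is_3HomPreLie (fun u v w => rho (T u) (T v) w) beta.
Proof.
move=> _ repV OT.
have [linbeta [lin3 [lin1 [lin2 [skew _]]]]] := repV.
have [linT _] := OT.
split; first exact: (induced_trilinear linT lin3 lin1 lin2).
split; first exact: linbeta.
split; first by move=> x y z; rewrite skew.
split.
- exact: (induced_3HomPreLie_ax1 repV OT).
- exact: (induced_3HomPreLie_ax2 repV OT).
Qed.
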